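(* Let $\mu$ be a finite Borel measure on $\mathbb{R}$ with all moments $y_k=\int x^kd\mu$ finite, $\mathbf{y}=(y_k)$, and assume $\mathbf{H}_d(\mathbf{y})\succ0$ for all $d\in\mathbb{N}$. Fix $d\in\mathbb{N}$ and let $$a_d=\max_{a\in\mathbb{R}}\{a:\mathbf{H}_d(\theta_a\mathbf{y})\succeq0\},\qquad b_d=\min_{b\in\mathbb{R}}\{b:\mathbf{H}_d(-\theta_b\mathbf{y})\succeq0\},$$ $$a_d^*=\inf\Big\{\int x\,\sigma(x)\,d\mu(x):\ \sigma\in\Sigma[x]_d,\ \int\sigma\,d\mu=1\Big\},\qquad b_d^*=\sup\Big\{\int x\,\sigma(x)\,d\mu(x):\ \sigma\in\Sigma[x]_d,\ \int\sigma\,d\mu=1\Big\}.$$ Then $a_d=a_d^*$ and $b_d=b_d^*$; the infimum defining $a_d^*$ is attained at some $\sigma^*\in\Sigma[x]_d$ and the supremum defining $b_d^*$ is attained at some $\psi^*\in\Sigma[x]_d$; and $$\int(x-a_d)\,\sigma^*(x)\,d\mu(x)=0=\int(b_d-x)\,\psi^*(x)\,d\mu(x).$$ Moreover, if $\sigma^*=\sum_\ell p_\ell^2$ with polynomials $p_\ell$ of degree at most $d$ and coefficient vectors $\mathbf{p}_\ell\in\mathbb{R}^{d+1}$ (in the basis $1,x,\ldots,x^d$), then each $\mathbf{p}_\ell$ lies in the kernel of $\mathbf{H}_d(\theta_{a_d}\mathbf{y})$.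
   Context: $\Sigma[x]_d$ denotes the set of real univariate polynomials of degree at most $2d$ that are sums of squares of polynomials. For a sequence $\mathbf{y}=(y_k)_{k\in\mathbb{N}}$ and a polynomial $\theta(x)=\sum_{k=0}^s\theta_kx^k$, $\mathbf{H}_d(\theta\,\mathbf{y})$ is the $(d+1)\times(d+1)$ symmetric matrix with entries $\sum_{k=0}^s\theta_k\,y_{i+j+k-2}$, $i,j=1,\ldots,d+1$; $\mathbf{H}_d(\mathbf{y})$ is the Hankel matrix with entries $y_{i+j-2}$. For $a\in\mathbb{R}$, $\theta_a(x)=x-a$, so $\mathbf{H}_d(\theta_a\mathbf{y})(i,j)=y_{i+j-1}-a\,y_{i+j-2}$ and $\mathbf{H}_d(-\theta_b\mathbf{y})(i,j)=b\,y_{i+j-2}-y_{i+j-1}$. $\succeq0$ (resp. $\succ0$) denotes positive semidefiniteness (resp. definiteness). *)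

(* Real numbers are modelled by an arbitrary real closed field. *)
From HB Require Import structures.
From mathcomp Require Import all_boot all_order all_algebra.
Set Implicit Arguments. Unset Strict Implicit. Unset Printing Implicit Defensive.
Import Order.TTheory GRing.Theory Num.Theory.
Local Open Scope ring_scope.

(* Riesz functional of the moment sequence y: for p = sum_k p_k x^k,
   Ly y p = sum_k p_k y_k  (= \int p d\mu when y_k = \int x^k d\mu). *)
Definition Ly (R : ringType) (y : nat -> R) (p : {poly R}) : R :=
  \sum_(k < size p) p`_k * y k.

Definition Hmx (R : ringType) (d : nat) (y : nat -> R) : 'M[R]_d.+1 :=
  \matrix_(i < d.+1, j < d.+1) y (i + j)%N.

Definition Hloc (R : ringType) (d : nat) (theta : {poly R}) (y : nat -> R)
  : 'M[R]_d.+1 :=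
  \matrix_(i < d.+1, j < d.+1) \sum_(k < size theta) theta`_k * y (i + j + k)%N.

Definition theta (R : ringType) (a : R) : {poly R} := 'X - a%:P.

(* positive semidefinite / definite (for the symmetric matrices at hand) *)
Definition psd (R : numDomainType) (n : nat) (A : 'M[R]_n) : Prop :=
  forall v : 'cV[R]_n, 0 <= (v^T *m A *m v) ord0 ord0.
Definition pd (R : numDomainType) (n : nat) (A : 'M[R]_n) : Prop :=
  forall v : 'cV[R]_n, v != 0 -> 0 < (v^T *m A *m v) ord0 ord0.

Definition sos_d (R : ringType) (d : nat) (p : {poly R}) : Prop :=
  (size p <= (2 * d).+1)%N /\
  exists s : seq {poly R}, p = \sum_(q <- s) q ^+ 2.

Definition coefv (R : ringType) (d : nat) (p : {poly R}) : 'cV[R]_d.+1 :=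
  \col_(i < d.+1) p`_i.

From HB Require Import structures.
From mathcomp Require Import all_boot all_order all_algebra.
From mathcomp Require Import polyrcf ring lra zify.
Set Implicit Arguments. Unset Strict Implicit. Unset Printing Implicit Defensive.
Import Order.TTheory GRing.Theory Num.Theory.
Local Open Scope ring_scope.

(* Write [M = H_d(x y)] and [A = H_d(y)], positive definite. Then [H_d(theta_a y) = M - a A],
   and for [deg q <= d] the value [L_y((x - a) q^2)] is the quadratic form of [M - a A] at the
   coefficient vector of [q]. So [a_d] is the least generalized eigenvalue of the pencil
   [(M, A)]: [M - a_d A] is positive semidefinite with a kernel vector [v], normalized by
   [v^T A v = 1]. Its polynomial [q_v] gives [sigma_star = q_v^2] with [L_y(sigma_star) = 1]
   and [L_y(x sigma_star) = a_d]; for any normalized [sigma = sum p_l^2], [L_y((x - a_d) sigma)]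
   is a sum of forms [p_l^T (M - a_d A) p_l >= 0], which vanishes only if every [p_l] lies in
   the kernel. [b_d] is the same argument for [-x].
   Over a real closed field the eigenvalue is found without spectral theory: along the pencil,
   positive definiteness is governed by the leading principal minors (Sylvester's criterion),
   and the first root of their product is where the pencil becomes singular. *)

Section QuadraticForm.
Variable R : comNzRingType.

Definition bform n (N : 'M[R]_n) (u v : 'cV[R]_n) : R := (u^T *m N *m v) 0 0.
Definition qform n (N : 'M[R]_n) (v : 'cV[R]_n) : R := bform N v v.

Lemma mx11D (A B : 'M[R]_1) : (A + B) 0 0 = A 0 0 + B 0 0.
Proof. by rewrite mxE. Qed.

Lemma mx11M (A B : 'M[R]_1) : (A *m B) 0 0 = A 0 0 * B 0 0.
Proof. by rewrite mxE big_ord1. Qed.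

Lemma mx11T (A : 'M[R]_1) : A^T 0 0 = A 0 0.
Proof. by rewrite mxE. Qed.

Lemma qformD n (N1 N2 : 'M[R]_n) v : qform (N1 + N2) v = qform N1 v + qform N2 v.
Proof. by rewrite /qform /bform mulmxDr mulmxDl mxE. Qed.

Lemma qformZ n (N : 'M[R]_n) c v : qform (c *: N) v = c * qform N v.
Proof. by rewrite /qform /bform -scalemxAr -scalemxAl mxE. Qed.

Lemma qformN n (N : 'M[R]_n) v : qform (- N) v = - qform N v.
Proof. by rewrite -scaleN1r qformZ mulN1r. Qed.

Lemma qformB n (N1 N2 : 'M[R]_n) v : qform (N1 - N2) v = qform N1 v - qform N2 v.
Proof. by rewrite qformD qformN. Qed.

Lemma bformZr n (N : 'M[R]_n) u c v : bform N u (c *: v) = c * bform N u v.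
Proof. by rewrite /bform -scalemxAr mxE. Qed.

Lemma bformZl n (N : 'M[R]_n) c u v : bform N (c *: u) v = c * bform N u v.
Proof. by rewrite /bform linearZ /= -!scalemxAl mxE. Qed.

Lemma bformC n (N : 'M[R]_n) u v : N^T = N -> bform N u v = bform N v u.
Proof. by move=> sN; rewrite /bform -mx11T !trmx_mul trmxK sN mulmxA. Qed.

Lemma qform_scale n (N : 'M[R]_n) c v : qform N (c *: v) = c ^+ 2 * qform N v.
Proof. by rewrite /qform bformZl bformZr mulrA expr2. Qed.

Lemma qformDv n (N : 'M[R]_n) u v : N^T = N ->
  qform N (u + v) = qform N u + 2%:R * bform N u v + qform N v.
Proof.
move=> sN; rewrite {1}/qform /bform [(u + v)^T]linearD /= !mulmxDl !mulmxDr !mx11D.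
rewrite -[(v^T *m N *m u) 0 0]/(bform N v u) bformC //.
by rewrite /qform /bform; ring.
Qed.

Lemma qform_kernel n (N : 'M[R]_n) v : N *m v = 0 -> qform N v = 0.
Proof. by move=> Nv0; rewrite /qform /bform -mulmxA Nv0 mulmx0 mxE. Qed.

End QuadraticForm.

Definition leadmx (R : Type) n (N : 'M[R]_n.+1) k : 'M[R]_k.+1 :=
  \matrix_(i, j) N (inord i) (inord j).

Section Schur.
Variable R : fieldType.

Definition schur m (K : 'M[R]_(1 + m)) : 'M[R]_m :=
  drsubmx K - (ulsubmx K 0 0)^-1 *: (dlsubmx K *m ursubmx K).

Lemma det_schur m (K : 'M[R]_(1 + m)) : ulsubmx K 0 0 != 0 ->
  \det K = ulsubmx K 0 0 * \det (schur K).
Proof.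
move=> p0; set p := ulsubmx K 0 0.
have KLU : K = block_mx 1%:M 0 (p^-1 *: dlsubmx K) 1%:M *m
               block_mx (ulsubmx K) (ursubmx K) 0 (schur K).
  rewrite mulmx_block !mul1mx !mul0mx !addr0 [ulsubmx K in X in _ *m X]mx11_scalar.
  rewrite mul_mx_scalar scalerA mulfV // scale1r /schur -scalemxAl addrC subrK.
  by rewrite submxK.
by rewrite {1}KLU det_mulmx det_lblock det_ublock !det1 !mul1r det_mx11.
Qed.

Lemma schur_sym m (K : 'M[R]_(1 + m)) : K^T = K -> (schur K)^T = schur K.
Proof.
by move=> sK; rewrite /schur linearB linearZ /= trmx_mul trmx_dlsub trmx_ursub trmx_drsub sK.
Qed.

Lemma qform_col_mx m (K : 'M[R]_(1 + m)) (t : 'cV[R]_1) (w : 'cV[R]_m) : K^T = K ->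
  qform K (col_mx t w) =
  ulsubmx K 0 0 * t 0 0 ^+ 2 + 2%:R * t 0 0 * (ursubmx K *m w) 0 0 + qform (drsubmx K) w.
Proof.
move=> sK; have dlK : dlsubmx K = (ursubmx K)^T by rewrite trmx_ursub sK.
rewrite /qform /bform tr_col_mx -[K in LHS]submxK mul_row_block mul_row_col dlK.
rewrite !mulmxDl -trmx_mul -[t^T *m _ *m w]mulmxA.
by rewrite !mx11D !mx11M !mx11T; ring.
Qed.

Lemma qform_schur_r m (K : 'M[R]_(1 + m)) w : K^T = K ->
  qform (schur K) w = qform (drsubmx K) w - (ulsubmx K 0 0)^-1 * (ursubmx K *m w) 0 0 ^+ 2.
Proof.
move=> sK; have dlK : dlsubmx K = (ursubmx K)^T by rewrite trmx_ursub sK.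
rewrite /schur qformD qformN qformZ dlK {2}/qform /bform !mulmxA -trmx_mul.
by rewrite -[_ *m ursubmx K *m w]mulmxA mx11M mx11T expr2.
Qed.

Lemma qform_schur m (K : 'M[R]_(1 + m)) t w : K^T = K -> ulsubmx K 0 0 != 0 ->
  qform K (col_mx t w) = ulsubmx K 0 0 * (t 0 0 + (ulsubmx K 0 0)^-1 * (ursubmx K *m w) 0 0) ^+ 2
                         + qform (schur K) w.
Proof. by move=> sK p0; rewrite qform_col_mx // qform_schur_r //; field. Qed.

Lemma sym_det0_kernel n (N : 'M[R]_n) : N^T = N -> \det N = 0 ->
  exists2 v : 'cV[R]_n, v != 0 & N *m v = 0.
Proof.
move=> sN /eqP /det0P[w w0 wN0]; exists w^T; first by rewrite trmx_eq0.
by rewrite -sN -trmx_mul wN0 trmx0.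
Qed.

Lemma det_leadmx0 n (K : 'M[R]_(1 + n)) : \det (leadmx K 0) = ulsubmx K 0 0.
Proof. by rewrite det_mx11 !mxE; congr (K _ _); apply: val_inj; rewrite /= inordK. Qed.

Lemma leadmx_schur n (K : 'M[R]_(1 + n.+1)) k : (k <= n)%N ->
  leadmx (schur K) k = schur (leadmx K k.+1 : 'M_(1 + k.+1)).
Proof.
move=> le_kn; apply/matrixP => i j; rewrite !mxE !big_ord1 !mxE.
have lt_in : (i < n.+1)%N by apply: leq_trans (ltn_ord i) _.
have lt_jn : (j < n.+1)%N by apply: leq_trans (ltn_ord j) _.
by congr (K _ _ - (K _ _)^-1 * (K _ _ * K _ _)); apply: val_inj; rewrite /= ?inordK.
Qed.

Lemma det_leadmxS n (K : 'M[R]_(1 + n.+1)) k : (k <= n)%N -> ulsubmx K 0 0 != 0 ->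
  \det (leadmx K k.+1) = ulsubmx K 0 0 * \det (leadmx (schur K) k).
Proof.
move=> le_kn p0; have p_lead : ulsubmx (leadmx K k.+1 : 'M_(1 + k.+1)) 0 0 = ulsubmx K 0 0.
  by rewrite !mxE; congr (K _ _); apply: val_inj; rewrite /= inordK.
by rewrite leadmx_schur // -p_lead det_schur // p_lead.
Qed.

End Schur.

Section PsdKernel.
Variable R : realFieldType.

Lemma bform_sqr n (N : 'M[R]_n) v : bform N (N *m v) v = \sum_i (N *m v) i 0 ^+ 2.
Proof.
by rewrite /bform -mulmxA mxE; apply: eq_bigr => i _; rewrite mxE expr2.
Qed.

(* Otherwise the form would be negative at [v + t N v] for [t = - |N v|^2 / (qform N (N v) + 1)]. *)
Lemma psd_qform_eq0 n (N : 'M[R]_n) v : N^T = N -> psd N -> qform N v = 0 -> N *m v = 0.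
Proof.
move=> sN psdN qv0; set w := N *m v.
pose a := \sum_i w i 0 ^+ 2; pose b := qform N w; pose t := - a / (b + 1).
have b_ge0 : 0 <= b := psdN w.
have : 0 <= qform N (v + t *: w) := psdN _.
rewrite qformDv // qv0 add0r bformZr bformC // bform_sqr -/a qform_scale -/b.
have tb1 : t * (b + 1) = - a by rewrite /t mulfVK // gt_eqF // ltr_wpDl.
move=> /(mulr_ge0 (sqr_ge0 (b + 1))).
have -> : (b + 1) ^+ 2 * (2%:R * (t * a) + t ^+ 2 * b) = - (a ^+ 2 * (b + 2%:R)).
  by rewrite -[a]opprK -tb1; ring.
rewrite oppr_ge0 pmulr_lle0 ?ltr_wpDl ?ler0n // => a2_le0.
have /eqP : a = 0 by apply/eqP; rewrite -sqrf_eq0 eq_le a2_le0 sqr_ge0.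
rewrite psumr_eq0 => [/allP w0|i _]; last exact: sqr_ge0.
apply/matrixP => i j; rewrite (ord1 j) [RHS]mxE; apply/eqP.
by rewrite -sqrf_eq0; exact: w0 (mem_index_enum i).
Qed.

Lemma psdZ n (N : 'M[R]_n) c : 0 <= c -> psd N -> psd (c *: N).
Proof.
by move=> c_ge0 psdN v; change (0 <= qform (c *: N) v); rewrite qformZ mulr_ge0 //; apply: psdN.
Qed.

Lemma psd_unitmx_pd n (N : 'M[R]_n) : N^T = N -> psd N -> N \in unitmx -> pd N.
Proof.
move=> sN psdN unitN v v0; change (0 < qform N v); rewrite lt_def psdN andbT.
apply: contra v0 => /eqP /(psd_qform_eq0 sN psdN) Nv0.
by rewrite -(mulKmx unitN v) Nv0 mulmx0.
Qed.

Lemma psd_shift_le n (M A : 'M[R]_n) l b (v : 'cV[R]_n) : pd A -> v != 0 ->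
  (M - l *: A) *m v = 0 -> psd (M - b *: A) -> b <= l.
Proof.
move=> pdA v0 kerv /(_ v); change (0 <= qform (M - b *: A) v -> b <= l).
have -> : M - b *: A = (M - l *: A) + (l - b) *: A by rewrite scalerBl addrA subrK.
rewrite qformD qformZ qform_kernel // add0r pmulr_lge0 ?subr_ge0 //; exact: pdA.
Qed.

End PsdKernel.

Section Sylvester.
Variable R : realFieldType.

Lemma pd_schurP m (K : 'M[R]_(1 + m)) : K^T = K ->
  pd K <-> 0 < ulsubmx K 0 0 /\ pd (schur K).
Proof.
move=> sK; split=> [pdK | [p_gt0 pdS] v v0].
  have e0_neq0 : col_mx 1%:M 0 != 0 :> 'cV[R]_(1 + m).
    by rewrite col_mx_eq0 negb_and -[1%:M]/(1 : 'M[R]_1) oner_neq0.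
  have p_gt0 : 0 < ulsubmx K 0 0.
    have : 0 < qform K (col_mx 1%:M 0) := pdK _ e0_neq0.
    rewrite qform_col_mx // mulmx0 (qform_kernel (mulmx0 _ _)) !mxE /=.
    by rewrite mulr1n expr1n mulr1 mulr0 !addr0.
  split=> // w w0; set c := - ((ulsubmx K 0 0)^-1 * (ursubmx K *m w) 0 0).
  have : 0 < qform K (col_mx c%:M w).
    by apply: pdK; rewrite col_mx_eq0 negb_and w0 orbT.
  by rewrite qform_schur ?gt_eqF // [c%:M 0 0]mxE eqxx mulr1n addNr expr0n mulr0 add0r.
change (0 < qform K v); rewrite -(vsubmxK v) qform_schur ?gt_eqF //.
have [w0|w0] := eqVneq (dsubmx v) 0.
  rewrite w0 mulmx0 [(0 : 'cV[R]_1) 0 0]mxE mulr0 addr0 (qform_kernel (mulmx0 _ _)) addr0.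
  rewrite pmulr_rgt0 // lt_def sqr_ge0 sqrf_eq0 andbT; apply: contra v0 => /eqP u0.
  by rewrite -(vsubmxK v) w0 [usubmx v]mx11_scalar u0 raddf0 col_mx0.
by rewrite ltr_wpDl ?(mulr_ge0 (ltW p_gt0) (sqr_ge0 _)) //; apply: pdS.
Qed.

Theorem sylvester n (N : 'M[R]_n.+1) : N^T = N ->
  pd N <-> forall k, (k <= n)%N -> 0 < \det (leadmx N k).
Proof.
elim: n N => [|n IH] N sN; rewrite (pd_schurP (K := N : 'M_(1 + _))) //.
  split=> [[p_gt0 _] k|minors_gt0]; first by rewrite leqn0 => /eqP ->; rewrite det_leadmx0.
  split; first by rewrite -det_leadmx0; exact: minors_gt0.
  by move=> v; rewrite flatmx0 eqxx.
rewrite IH ?schur_sym //; split=> [[p_gt0 minors_gt0] [|k] le_kn|minors_gt0].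
- by rewrite det_leadmx0.
- by rewrite det_leadmxS ?gt_eqF // mulr_gt0 // minors_gt0.
have p_gt0 : 0 < ulsubmx (N : 'M_(1 + n.+1)) 0 0 by rewrite -det_leadmx0; exact: minors_gt0.
split=> // k le_kn; have := minors_gt0 k.+1 le_kn.
by rewrite det_leadmxS ?gt_eqF // pmulr_rgt0.
Qed.

End Sylvester.

Lemma poly_ge0_right_end (R : rcfType) (p : {poly R}) s t : s < t ->
  {in `[s, t[, forall x, 0 < p.[x]} -> 0 <= p.[t].
Proof.
move=> lt_st p_gt0; rewrite leNgt; apply/negP => pt_lt0.
have [|x x_in] := poly_ivtoo (ltW lt_st) (p := p).
  by rewrite pmulr_rlt0 // p_gt0 // in_itv /= lexx.
apply/negP; rewrite /root gt_eqF // p_gt0 //.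
by move: x_in; rewrite !in_itv /= => /andP[/ltW -> ->].
Qed.

Lemma noroot_itv_co (R : numDomainType) (p : {poly R}) s b : ~~ root p s ->
  {in `]s, b[, forall x, ~~ root p x} -> {in `[s, b[, forall x, ~~ root p x}.
Proof.
move=> nroot_s noroot x; rewrite in_itv /= le_eqVlt => /andP[/orP[/eqP <- // | lt_sx] lt_xb].
by apply: noroot; rewrite in_itv /= lt_sx.
Qed.

Section Pencil.
Variables (R : rcfType) (n : nat) (X Y : 'M[R]_n.+1).
Hypotheses (sX : X^T = X) (sY : Y^T = Y).

Definition minor_poly k : {poly R} :=
  \det (map_mx polyC (leadmx X k) + 'X *: map_mx polyC (leadmx Y k)).

Definition minors_poly : {poly R} := \prod_(k < n.+1) minor_poly k.

Lemma horner_minor_poly k t : (minor_poly k).[t] = \det (leadmx (X + t *: Y) k).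
Proof.
rewrite /minor_poly -horner_evalE -det_map_mx; congr (\det _); apply/matrixP => i j.
by rewrite !mxE /= horner_evalE hornerD hornerM hornerX !hornerC mulrC.
Qed.

Lemma pencil_sym t : (X + t *: Y)^T = X + t *: Y.
Proof. by rewrite linearD linearZ /= sX sY. Qed.

Lemma pd_pencil_noroot t : pd (X + t *: Y) -> ~~ root minors_poly t.
Proof.
move=> /(sylvester (pencil_sym t)) minors_gt0.
rewrite /root horner_prod gt_eqF // prodr_gt0 // => k _.
by rewrite horner_minor_poly minors_gt0 // -ltnS.
Qed.

Lemma pd_pencil_itv (i : interval R) s t : s \in i -> t \in i ->
  {in i, forall x, ~~ root minors_poly x} -> pd (X + s *: Y) -> pd (X + t *: Y).
Proof.
move=> s_in t_in noroot /(sylvester (pencil_sym s)) minors_s.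
apply/(sylvester (pencil_sym t)) => k le_kn; rewrite -horner_minor_poly.
have noroot_k : {in i, forall x, ~~ root (minor_poly k) x}.
  move=> x /noroot; rewrite /root horner_prod => /prodf_neq0 /(_ (Ordinal _) isT).
  by apply; rewrite ltnS.
rewrite -sgr_cp0 (polyrN0_itv noroot_k s_in t_in) sgr_cp0 horner_minor_poly.
exact: minors_s.
Qed.

Lemma psd_pencil_right_end s t : s < t ->
  {in `[s, t[, forall x, pd (X + x *: Y)} -> psd (X + t *: Y).
Proof.
move=> lt_st pd_st v; change (0 <= qform (X + t *: Y) v).
have [->|v0] := eqVneq v 0; first by rewrite (qform_kernel (mulmx0 _ _)).
pose p := (qform X v)%:P + qform Y v *: 'X.
have pE x : p.[x] = qform (X + x *: Y) v.
  by rewrite hornerD hornerZ hornerX hornerC qformD qformZ mulrC.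
by rewrite -pE; apply: poly_ge0_right_end lt_st _ => x /pd_st pd_x; rewrite pE; apply: pd_x.
Qed.

(* The first root [r > s] of the product of the leading principal minors: the pencil is positive
   definite on [[s, r[], hence semidefinite at [r], and it cannot be definite at [r]. *)
Lemma pencil_boundary s t : s < t -> pd (X + s *: Y) -> ~ pd (X + t *: Y) ->
  exists2 r, s < r & psd (X + r *: Y) /\ \det (X + r *: Y) = 0.
Proof.
move=> lt_st pd_s npd_t; have noroot_s := pd_pencil_noroot pd_s.
have s_in b : s < b -> s \in `[s, b[ by rewrite in_itv /= lexx.
case: (next_rootP minors_poly s (t + 1)) => [Q0 | r _ Qr r_in noroot_sr | c _ _ noroot_st].
- by move: noroot_s; rewrite Q0 root0.
- have lt_sr : s < r by move: r_in; rewrite in_itv /= => /andP[].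
  have pd_sr x : x \in `[s, r[ -> pd (X + x *: Y).
    by move=> x_in; apply: pd_pencil_itv (s_in _ lt_sr) x_in _ pd_s; exact: noroot_itv_co.
  have psd_r := psd_pencil_right_end lt_sr pd_sr.
  exists r => //; split=> //; move/eqP: Qr; apply: contraTeq => det_r.
  apply: pd_pencil_noroot; apply: psd_unitmx_pd psd_r _; first exact: pencil_sym.
  by rewrite unitmxE unitfE.
- have lt_st1 : s < t + 1 by rewrite (lt_trans lt_st) // ltrDl ltr01.
  case: npd_t; apply: pd_pencil_itv (s_in _ lt_st1) _ _ pd_s; last exact: noroot_itv_co.
  by rewrite in_itv /= ltW //= ltrDl ltr01.
Qed.

End Pencil.

Lemma pd_normalize (R : rcfType) n (A : 'M[R]_n) (v : 'cV[R]_n) : pd A -> v != 0 ->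
  exists c, qform A (c *: v) = 1.
Proof.
move=> pdA v0; have Av_gt0 : 0 < qform A v := pdA v v0.
exists (Num.sqrt (qform A v)^-1).
by rewrite qform_scale sqr_sqrtr ?invr_ge0 ?ltW // mulVf ?gt_eqF.
Qed.

(* Shifting [M] by [c A] makes the pencil [A + s (M - c A)] leave the positive definite cone
   before [s = 1]; its boundary point [r] yields the eigenvalue [c - 1 / r]. *)
Lemma psd_singular_shift (R : rcfType) n (M A : 'M[R]_n.+1) :
  M^T = M -> A^T = A -> pd A ->
  exists l, psd (M - l *: A) /\ exists2 v : 'cV[R]_n.+1, v != 0 & (M - l *: A) *m v = 0.
Proof.
move=> sM sA pdA; pose e : 'cV[R]_n.+1 := const_mx 1.
have e0 : e != 0 by apply/eqP => /matrixP /(_ 0 0); rewrite !mxE; apply/eqP; exact: oner_neq0.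
have Ae_gt0 : 0 < qform A e := pdA e e0.
pose c := qform M e / qform A e + 1; pose M' := M - c *: A.
have sM' : M'^T = M' by rewrite /M' linearB linearZ /= sM sA.
have pd0 : pd (A + 0 *: M') by rewrite scale0r addr0.
have npd1 : ~ pd (A + 1 *: M').
  move=> /(_ e e0); change (~ 0 < qform (A + 1 *: M') e).
  by rewrite scale1r qformD qformB qformZ /c mulrDl mul1r mulfVK ?gt_eqF //; lra.
have [r r_gt0 [psd_r det_r]] := pencil_boundary sA sM' ltr01 pd0 npd1.
exists (c - r^-1); have -> : M - (c - r^-1) *: A = r^-1 *: (A + r *: M').
  by rewrite scalerDr scalerA mulVf ?gt_eqF // scale1r /M' scalerBl opprB addrCA addrC.
split; first by apply: psdZ psd_r; rewrite invr_ge0 ltW.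
apply: sym_det0_kernel; first by rewrite linearZ /= pencil_sym.
by rewrite detZ det_r mulr0.
Qed.

Section SumOfSquares.
Variable R : realDomainType.

Lemma size_addr_lead_ge0 (p q : {poly R}) : 0 <= lead_coef p -> 0 <= lead_coef q ->
  (size p <= size (p + q)%R)%N /\ 0 <= lead_coef (p + q).
Proof.
move=> p_ge0 q_ge0; case: (ltngtP (size p) (size q)) => [lt_pq|lt_qp|eq_pq].
- by rewrite addrC size_polyDl ?lead_coefDl ?(ltnW lt_pq).
- by rewrite size_polyDl ?lead_coefDl.
have [->|p0] := eqVneq p 0; first by rewrite add0r size_poly0.
have lc_gt0 : 0 < (p + q)`_(size p).-1.
  rewrite coefD eq_pq -!lead_coefE -eq_pq ltr_wpDr //.
  by rewrite lt_def lead_coef_eq0 p0.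
have size_pq : size (p + q) = size p.
  apply/eqP; rewrite eqn_leq (leq_trans (size_polyD _ _)) -?eq_pq ?maxnn //=.
  have sp_gt0 : (0 < size p)%N by rewrite size_poly_gt0.
  rewrite -(prednK sp_gt0) ltnNge; apply/negP => /leq_sizeP /(_ _ (leqnn _)) pq0.
  by rewrite pq0 ltxx in lc_gt0.
by rewrite size_pq lead_coefE size_pq ltW.
Qed.

Lemma size_sum_sqr (ps : seq {poly R}) p : p \in ps ->
  (size (p ^+ 2)%R <= size (\sum_(q <- ps) q ^+ 2)%R)%N.
Proof.
have sqr_lead_ge0 (q : {poly R}) : 0 <= lead_coef (q ^+ 2) by rewrite lead_coef_exp sqr_ge0.
suff : 0 <= lead_coef (\sum_(q <- ps) q ^+ 2) /\
       forall p, p \in ps -> (size (p ^+ 2)%R <= size (\sum_(q <- ps) q ^+ 2)%R)%N.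
  by case=> _; apply.
elim: ps => [|q ps [IHlead IHsize]]; first by rewrite big_nil lead_coef0.
rewrite big_cons; have [le_q lead_ge0] := size_addr_lead_ge0 (sqr_lead_ge0 q) IHlead.
split=> // r; rewrite inE => /orP[/eqP -> // | /IHsize le_r].
rewrite (leq_trans le_r) // addrC.
by have [] := size_addr_lead_ge0 IHlead (sqr_lead_ge0 q).
Qed.

Lemma sqr_sos_d d (q : {poly R}) : (size q <= d.+1)%N -> sos_d d (q ^+ 2).
Proof.
move=> le_qd; split; last by exists [:: q]; rewrite big_seq1.
by rewrite (leq_trans (size_poly_exp_leq _ _)) //; move: le_qd; case: (size q) => //= m; lia.
Qed.

End SumOfSquares.

Lemma sos_factor_size (R : realDomainType) d (ps : seq {poly R}) p :
  (size (\sum_(q <- ps) q ^+ 2)%R <= (2 * d).+1)%N -> p \in ps -> (size p <= d.+1)%N.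
Proof.
move=> size_s /size_sum_sqr /leq_trans /(_ size_s); have := size_exp p 2.
by case: (size (p ^+ 2)%R) => [|b]; case: (size p) => [|a] //=; lia.
Qed.

Section Riesz.
Variables (R : comNzRingType) (y : nat -> R).

Lemma LyE (p : {poly R}) m : (size p <= m)%N -> Ly y p = \sum_(k < m) p`_k * y k.
Proof.
move=> le_pm; rewrite /Ly (big_ord_widen m (fun k => p`_k * y k) le_pm) big_mkcond.
by apply: eq_bigr => k _; case: ltnP => // /(nth_default 0) ->; rewrite mul0r.
Qed.

Lemma Ly_is_linear : linear_for *%R (Ly y).
Proof.
move=> a p q; pose m := (size (a *: p + q)%R + size p + size q)%N.
have le_apq : (size (a *: p + q)%R <= m)%N by rewrite /m -addnA leq_addr.
have le_p : (size p <= m)%N by rewrite /m -addnA (leq_trans _ (leq_addl _ _)) ?leq_addr.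
have le_q : (size q <= m)%N by rewrite /m leq_addl.
rewrite !(LyE (m := m)) // mulr_sumr -big_split.
by apply: eq_bigr => k _; rewrite coefD coefZ mulrDl mulrA.
Qed.

HB.instance Definition _ := GRing.isLinear.Build R {poly R} R *%R (Ly y) Ly_is_linear.

Lemma LyXn m : Ly y 'X^m = y m.
Proof.
rewrite (LyE (m := m.+1)) ?size_polyXn // big_ord_recr /= big1 => [|k _].
  by rewrite coefXn eqxx mul1r add0r.
by rewrite coefXn ltn_eqF // mul0r.
Qed.

Lemma Ly_mulXn (p : {poly R}) m : Ly y (p * 'X^m) = \sum_(k < size p) p`_k * y (k + m).
Proof.
rewrite -[p in LHS]coefK poly_def mulr_suml linear_sum.
by apply: eq_bigr => k _; rewrite -scalerAl -exprD linearZ /= LyXn.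
Qed.

Lemma HlocE d th : Hloc d th y = \matrix_(i, j) Ly y (th * 'X^(i + j)).
Proof. by apply/matrixP => i j; rewrite !mxE Ly_mulXn; apply: eq_bigr => k _; rewrite addnC. Qed.

Lemma Hloc_sym d th : (Hloc d th y)^T = Hloc d th y.
Proof. by apply/matrixP => i j; rewrite !mxE; apply: eq_bigr => k _; rewrite (addnC j). Qed.

Lemma Hloc_subC d g a : Hloc d (g - a%:P) y = Hloc d g y - a *: Hmx d y.
Proof.
apply/matrixP => i j; rewrite !HlocE !mxE mulrBl linearB /=.
by rewrite mul_polyC linearZ /= LyXn.
Qed.

Lemma Hloc1 d : Hloc d 1 y = Hmx d y.
Proof. by apply/matrixP => i j; rewrite HlocE !mxE mul1r LyXn. Qed.

Lemma Ly_mul_subC g a s : Ly y ((g - a%:P) * s) = Ly y (g * s) - a * Ly y s.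
Proof. by rewrite mulrBl linearB /= mul_polyC linearZ. Qed.

Lemma Ly_mul_sqr d th (q : {poly R}) : (size q <= d.+1)%N ->
  Ly y (th * q ^+ 2) = qform (Hloc d th y) (coefv d q).
Proof.
move=> le_qd; have qE : q = \sum_(i < d.+1) q`_i *: 'X^i.
  rewrite -poly_def; apply/polyP => i; rewrite coef_poly; case: ltnP => // le_di.
  by rewrite nth_default // (leq_trans le_qd).
rewrite HlocE [in LHS]expr2 {1 2}qE mulr_suml mulr_sumr linear_sum /qform /bform mxE.
apply: eq_bigr => i _; rewrite mulr_sumr mulr_sumr linear_sum mxE mulr_suml.
apply: eq_bigr => j _; rewrite -scalerAl -!scalerAr -exprD !linearZ /= !mxE addnC.
by rewrite mulrC.
Qed.

Lemma Ly_sum_sqr d th (ps : seq {poly R}) : (forall p, p \in ps -> size p <= d.+1)%N ->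
  Ly y (th * \sum_(p <- ps) p ^+ 2) = \sum_(p <- ps) qform (Hloc d th y) (coefv d p).
Proof.
move=> le_psd; rewrite mulr_sumr linear_sum !big_seq; apply: eq_bigr => p p_in.
exact: Ly_mul_sqr (le_psd p p_in).
Qed.

End Riesz.

Section SosMoments.
Variables (R : realFieldType) (y : nat -> R) (d : nat).

Lemma Ly_sos_ge0 th s : psd (Hloc d th y) -> sos_d d s -> 0 <= Ly y (th * s).
Proof.
move=> psdH [size_s [ps s_def]]; rewrite s_def in size_s *.
rewrite (Ly_sum_sqr _ _ (fun p => sos_factor_size size_s)).
by apply: sumr_ge0 => p _; apply: psdH.
Qed.

Lemma psd_localizer_le a g s : psd (Hloc d (g - a%:P) y) -> sos_d d s -> Ly y s = 1 ->
  a <= Ly y (g * s).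
Proof.
move=> psdH sos_s Ls; have := Ly_sos_ge0 psdH sos_s.
by rewrite Ly_mul_subC Ls mulr1 subr_ge0.
Qed.

Lemma sos_kernel th (ps : seq {poly R}) : psd (Hloc d th y) ->
  (forall p, p \in ps -> size p <= d.+1)%N -> Ly y (th * \sum_(p <- ps) p ^+ 2) = 0 ->
  forall p, p \in ps -> Hloc d th y *m coefv d p = 0.
Proof.
move=> psdH le_psd; rewrite (Ly_sum_sqr _ _ le_psd) => /eqP.
rewrite psumr_eq0 => [/allP qform0 p p_in|p _]; last exact: psdH.
by apply: psd_qform_eq0 (Hloc_sym _ _ _) psdH _; apply/eqP; exact: qform0.
Qed.

End SosMoments.

Definition polyv (R : nzRingType) d (v : 'cV[R]_d.+1) : {poly R} :=
  \poly_(i < d.+1) v (inord i) 0.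

Lemma polyvK (R : nzRingType) d (v : 'cV[R]_d.+1) : coefv d (polyv v) = v.
Proof. by apply/matrixP => i j; rewrite mxE coef_poly ltn_ord (ord1 j) inord_val. Qed.

Section Extremal.
Variables (R : rcfType) (y : nat -> R) (d : nat) (g : {poly R}).
Hypothesis pdH : pd (Hmx d y).

Lemma sos_extremal : exists a sigma,
  [/\ psd (Hloc d (g - a%:P) y), forall b, psd (Hloc d (g - b%:P) y) -> b <= a,
      sos_d d sigma, Ly y sigma = 1 & Ly y (g * sigma) = a].
Proof.
have sH : (Hmx d y)^T = Hmx d y by rewrite -Hloc1 Hloc_sym.
have [a [psd_a [v v0 ker_v]]] := psd_singular_shift (Hloc_sym y d g) sH pdH.
have [c qc] := pd_normalize pdH v0; pose q := polyv (c *: v).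
have le_qd : (size q <= d.+1)%N by exact: size_poly.
have Lq : Ly y (q ^+ 2) = 1 by rewrite -[q ^+ 2]mul1r (Ly_mul_sqr _ _ le_qd) Hloc1 polyvK.
rewrite -Hloc_subC in psd_a ker_v.
have Lgq : Ly y ((g - a%:P) * q ^+ 2) = 0.
  by rewrite (Ly_mul_sqr _ _ le_qd) polyvK qform_kernel // -scalemxAr ker_v scaler0.
exists a, (q ^+ 2); split=> //.
- by move=> b; rewrite Hloc_subC; apply: psd_shift_le pdH v0 _; rewrite -Hloc_subC.
- exact: sqr_sos_d.
by move: Lgq; rewrite Ly_mul_subC Lq mulr1 => /eqP; rewrite subr_eq0 => /eqP.
Qed.

End Extremal.

Theorem theorem3p5 (R : rcfType) (y : nat -> R)
  (Hpd : forall d : nat, pd (Hmx d y)) (d : nat) :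
  exists (ad bd : R) (sig psi : {poly R}),
    (psd (Hloc d (theta ad) y) /\
       forall a : R, psd (Hloc d (theta a) y) -> a <= ad) /\
    (psd (Hloc d (- theta bd) y) /\
       forall b : R, psd (Hloc d (- theta b) y) -> bd <= b) /\
    (sos_d d sig /\ Ly y sig = 1 /\ Ly y ('X * sig) = ad /\
       forall s : {poly R}, sos_d d s -> Ly y s = 1 -> ad <= Ly y ('X * s)) /\
    (sos_d d psi /\ Ly y psi = 1 /\ Ly y ('X * psi) = bd /\
       forall s : {poly R}, sos_d d s -> Ly y s = 1 -> Ly y ('X * s) <= bd) /\
    Ly y (('X - ad%:P) * sig) = 0 /\ Ly y ((bd%:P - 'X) * psi) = 0 /\
    (forall (s : {poly R}) (ps : seq {poly R}),
       sos_d d s -> Ly y s = 1 -> Ly y ('X * s) = ad ->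
       s = \sum_(p <- ps) p ^+ 2 ->
       (forall p, p \in ps -> (size p <= d.+1)%N) ->
       forall p, p \in ps -> Hloc d (theta ad) y *m coefv d p = 0).
Proof.
have [a [sg [psd_a max_a sos_sg Lsg Lxsg]]] := sos_extremal 'X (Hpd d).
have [b [psi [psd_b max_b sos_psi Lpsi Lxpsi]]] := sos_extremal (- 'X) (Hpd d).
have ntheta c : - theta c = - 'X - (- c)%:P by rewrite /theta opprB polyCN opprK addrC.
have Lneg s : Ly y (- 'X * s) = - Ly y ('X * s) by rewrite mulNr linearN.
exists a, (- b), sg, psi; split; first by split.
split.
  by rewrite ntheta opprK; split=> // c; rewrite ntheta => /max_b; rewrite lerNl.
split; first by do 3!split=> //; move=> s; apply: psd_localizer_le psd_a.
split.
  do 3!split=> //; first by rewrite -Lxpsi Lneg opprK.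
  by move=> s sos_s Ls; rewrite lerNr -Lneg; apply: psd_localizer_le psd_b sos_s Ls.
split; first by rewrite Ly_mul_subC Lsg Lxsg mulr1 subrr.
split; first by rewrite polyCN addrC Ly_mul_subC Lxpsi Lpsi mulr1 subrr.
move=> s ps _ Ls Lxs s_def le_psd; apply: sos_kernel psd_a le_psd _.
by rewrite -s_def Ly_mul_subC Ls Lxs mulr1 subrr.
Qed.
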